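(* Both pairs $(T_n,T_L)$ and $(T_L',T_n')$ satisfy the rearrangement inequality and the dual rearrangement inequality.
   Context: Here $T_n(x,y)=\min(x,y)$ if $x+y>1$ and $0$ otherwise (nilpotent minimum); $T_L(x,y)=\max(x+y-1,0)$ (Łukasiewicz $T$-norm); $T_L'(x,y)=\min(x+y,1)$ (bounded sum); $T_n'(x,y)=\max(x,y)$ if $x+y<1$ and $1$ otherwise (nilpotent maximum); all are functions $[0,1]^2\to[0,1]$ and are commutative, associative, monotone uninorms. For such a pair $(\otimes,\oplus)$ (first component $\otimes$, second $\oplus$), it satisfies the rearrangement inequality if for every $n\geq1$, all $0\leq x_1\leq\cdots\leq x_n\leq 1$, $0\leq y_1\leq\cdots\leq y_n\leq 1$ and every permutation $\sigma$ of $\{1,\dots,n\}$, $$(x_n\otimes y_1)\oplus\cdots\oplus(x_1\otimes y_n)\leq (x_{\sigma(1)}\otimes y_1)\oplus\cdots\oplus(x_{\sigma(n)}\otimes y_n)\leq (x_1\otimes y_1)\oplus\cdots\oplus(x_n\otimes y_n),$$ and the dual rearrangement inequality if for all such data $$(x_n\oplus y_1)\otimes\cdots\otimes(x_1\oplus y_n)\geq (x_{\sigma(1)}\oplus y_1)\otimes\cdots\otimes(x_{\sigma(n)}\oplus y_n)\geq (x_1\oplus y_1)\otimes\cdots\otimes(x_n\oplus y_n).$$ *)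

From HB Require Import structures.
From mathcomp Require Import all_boot all_order all_algebra all_fingroup.
Set Implicit Arguments. Unset Strict Implicit. Unset Printing Implicit Defensive.
Import Order.TTheory GRing.Theory Num.Theory.
Local Open Scope ring_scope.

(* All operations are functions R -> R -> R; they are only ever applied
   to arguments in [0,1] (where they take values in [0,1]). *)

Definition Tn {R : realFieldType} (x y : R) : R :=
  if 1 < x + y then Num.min x y else 0.
Definition TL {R : realFieldType} (x y : R) : R := Num.max (x + y - 1) 0.
Definition TL' {R : realFieldType} (x y : R) : R := Num.min (x + y) 1.
Definition Tn' {R : realFieldType} (x y : R) : R :=
  if x + y < 1 then Num.max x y else 1.

Fixpoint iop {R : Type} (op : R -> R -> R) (f : nat -> R) (k : nat) : R :=
  match k with
  | 0 => f 0%N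
  | k'.+1 => op (iop op f k') (f k'.+1)
  end.

Definition bigop1 {R : Type} (op : R -> R -> R) (n : nat) (g : 'I_n.+1 -> R) : R :=
  iop op (fun i => g (inord i)) n.

Definition in01 {R : realFieldType} (x : R) := 0 <= x <= 1.

(* data: x_1 <= ... <= x_m, y_1 <= ... <= y_m in [0,1], m = n+1 >= 1,
   indexed 0..n; rev_ord i is the index m+1-i (in 1-based numbering). *)
Definition sorted01 {R : realFieldType} (n : nat) (x : 'I_n.+1 -> R) :=
  (forall i, in01 (x i)) /\ (forall i j : 'I_n.+1, (i <= j)%N -> x i <= x j).

Definition rearrangement_ineq {R : realFieldType} (otimes oplus : R -> R -> R) : Prop :=
  forall (n : nat) (x y : 'I_n.+1 -> R) (s : 'S_n.+1),
    sorted01 x -> sorted01 y ->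
    bigop1 oplus (fun i => otimes (x (rev_ord i)) (y i))
      <= bigop1 oplus (fun i => otimes (x (s i)) (y i))
    /\ bigop1 oplus (fun i => otimes (x (s i)) (y i))
      <= bigop1 oplus (fun i => otimes (x i) (y i)).

Definition dual_rearrangement_ineq {R : realFieldType} (otimes oplus : R -> R -> R) : Prop :=
  forall (n : nat) (x y : 'I_n.+1 -> R) (s : 'S_n.+1),
    sorted01 x -> sorted01 y ->
    bigop1 otimes (fun i => oplus (x (rev_ord i)) (y i))
      >= bigop1 otimes (fun i => oplus (x (s i)) (y i))
    /\ bigop1 otimes (fun i => oplus (x (s i)) (y i))
      >= bigop1 otimes (fun i => oplus (x i) (y i)).

From HB Require Import structures.
From mathcomp Require Import all_boot all_order all_algebra all_fingroup.
From mathcomp Require Import ring lra.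
Set Implicit Arguments. Unset Strict Implicit. Unset Printing Implicit Defensive.
Import Order.TTheory GRing.Theory Num.Theory.

(* Suppose the terms [H p i] of a commutative big operation satisfy the
   exchange inequality  op (H p m) (H q k) <= op (H p k) (H q m)  for p <= q, k <= m.
   If a permutation s is not the identity, let m be its largest displaced index and
   k = s^-1 m; composing s with the transposition (k m) fixes m, displaces fewer
   indices and, by the exchange inequality, does not decrease the big operation.  So the
   identity permutation is optimal; applied to the reversed sequence x with the reversed
   order it gives the lower bound.  T_n and T_L are commutative monoids on [0,1], and for
   (T_n, T_L) the exchange inequality is a case analysis, resting on the
   supermodularity of min.  Finally x |-> 1 - x exchanges T_L' with T_L and T_n' with
   T_n, reverses the order and turns sorted data into reversed sorted data, so the two
   inequalities for (T_L', T_n') are the dual and the plain inequality for (T_n, T_L). *)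

Lemma card_nonfixed_tperm_lt (T : finType) (s : {perm T}) m :
  s m != m ->
  #|[pred i | (tperm (s^-1 m) m * s)%g i != i]| < #|[pred i | s i != i]|.
Proof.
move=> smm; have km : (s^-1)%g m != m by apply: contraNneq smm => {1}<-; rewrite permKV.
rewrite [X in _ < X](cardD1 m) inE smm ltnS.
apply: subset_leq_card; apply/subsetP => i; rewrite !inE permM.
have [->|im] := eqVneq i m; first by rewrite tpermR permKV eqxx.
have [->|ik] := eqVneq i (s^-1 m)%g; first by move=> _; rewrite permKV eq_sym km.
by rewrite tpermD 1?eq_sym // => ->.
Qed.

Section Exchange.
Variables (T : Type) (idx : T) (op : Monoid.com_law idx) (le : rel T).
Hypotheses (le_refl : reflexive le) (le_trans : transitive le).
Hypothesis le_op2l : forall a b c, le b c -> le (op a b) (op a c).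
Variables (n : nat) (H : 'I_n.+1 -> 'I_n.+1 -> T).
Hypothesis H_exchange : forall p q k m : 'I_n.+1, p <= q -> k <= m ->
  le (op (H p m) (H q k)) (op (H p k) (H q m)).

Lemma le_big_tperm (s : 'S_n.+1) (k m : 'I_n.+1) :
  k != m -> k <= m -> s m <= m -> s k = m ->
  le (\big[op/idx]_i H (s i) i) (\big[op/idx]_i H ((tperm k m * s)%g i) i).
Proof.
move=> km le_km le_smm skm; have mk : m != k by rewrite eq_sym.
rewrite (bigD1 k) //= (bigD1 m mk) [X in le _ X](bigD1 k) //= (bigD1 m mk) /=.
rewrite !permM tpermL tpermR skm.
have -> : \big[op/idx]_(i | (i != k) && (i != m)) H ((tperm k m * s)%g i) i
          = \big[op/idx]_(i | (i != k) && (i != m)) H (s i) i.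
  by apply: eq_bigr => i /andP[ik im]; rewrite permM tpermD 1?eq_sym.
set r := \big[op/idx]_(i | _) _.
have op_rest a b : op a (op b r) = op r (op a b).
  by rewrite Monoid.mulmA Monoid.mulmC.
by rewrite !op_rest; apply: le_op2l; rewrite Monoid.mulmC; apply: H_exchange.
Qed.

Lemma le_big_perm_diag (s : 'S_n.+1) :
  le (\big[op/idx]_i H (s i) i) (\big[op/idx]_i H i i).
Proof.
have [N] := ubnP #|[pred i | s i != i]|; elim: N => // N IH in s *; rewrite ltnS => hN.
have [/forallP s_id|] := boolP [forall i, s i == i].
  by rewrite (eq_bigr (fun i => H i i)) // => i _; rewrite (eqP (s_id i)).
rewrite negb_forall => /existsP[i0 si0].
have [m smm m_max] := @arg_maxnP _ i0 (fun i => s i != i) (@nat_of_ord _) si0.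
set k := (s^-1)%g m.
have skm : s k = m by rewrite permKV.
have km : k != m by apply: contraNneq smm => km; rewrite -{1}km skm.
have le_km : k <= m by apply: m_max; rewrite skm eq_sym.
have le_smm : s m <= m by apply: m_max; apply: contraNneq smm => /perm_inj ->.
apply: le_trans (le_big_tperm km le_km le_smm skm) (IH _ _).
exact: leq_trans (card_nonfixed_tperm_lt smm) hN.
Qed.

End Exchange.

Local Open Scope ring_scope.

Definition com_monoid01 {R : realFieldType} (op : R -> R -> R) (e : R) :=
  [/\ in01 e, forall a b, in01 a -> in01 b -> in01 (op a b),
      forall a b c, in01 a -> in01 b -> in01 c -> op a (op b c) = op (op a b) c,
      forall a b, in01 a -> in01 b -> op a b = op b a
    & forall a, in01 a -> op e a = a].

(* [rearrangement_ineq otimes oplus] is [rearrangement_chain <=%R oplus otimes] and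
   [dual_rearrangement_ineq otimes oplus] is [rearrangement_chain >=%R otimes oplus]. *)
Definition rearrangement_chain {R : realFieldType} (le : rel R)
    (outer inner : R -> R -> R) :=
  forall (n : nat) (x y : 'I_n.+1 -> R) (s : 'S_n.+1), sorted01 x -> sorted01 y ->
    le (bigop1 outer (fun i => inner (x (rev_ord i)) (y i)))
       (bigop1 outer (fun i => inner (x (s i)) (y i)))
    /\ le (bigop1 outer (fun i => inner (x (s i)) (y i)))
          (bigop1 outer (fun i => inner (x i) (y i))).

Section UnitIntervalMonoid.
Variables (R : realFieldType) (op : R -> R -> R) (e : R).
Hypothesis op_monoid : com_monoid01 op e.

(* The operations are associative, commutative and unital only on [0,1], so the big
   operators of MathComp are used on this subtype. *)
Definition unit_interval := {x : R | in01 x}.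

Let e01 : in01 e. Proof. by case: op_monoid. Qed.
Let op01 a b : in01 a -> in01 b -> in01 (op a b).
Proof. by case: op_monoid => _ h _ _ _; apply: h. Qed.

Definition op_ui (a b : unit_interval) : unit_interval :=
  exist (@in01 R) _ (op01 (valP a) (valP b)).
Definition e_ui : unit_interval := exist (@in01 R) e e01.

Lemma op_uiA : associative op_ui.
Proof.
by case: op_monoid => _ _ opA _ _ a b c; apply: val_inj; rewrite /= opA //; apply: valP.
Qed.
Lemma op_uiC : commutative op_ui.
Proof.
by case: op_monoid => _ _ _ opC _ a b; apply: val_inj; rewrite /= opC //; apply: valP.
Qed.
Lemma op_ui1 : left_id e_ui op_ui.
Proof.
by case: op_monoid => _ _ _ _ op1 a; apply: val_inj; rewrite /= op1 //; apply: valP.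
Qed.

HB.instance Definition _ :=
  Monoid.isComLaw.Build unit_interval e_ui op_ui op_uiA op_uiC op_ui1.

Lemma iop_big (f : nat -> R) k : (forall i, in01 (f i)) ->
  iop op f k = val (\big[op_ui/e_ui]_(i < k.+1) insubd e_ui (f i)).
Proof.
move=> f01; elim: k => [|k IH] /=.
  by rewrite big_ord1 (insubdK _ (f01 _)).
by rewrite big_ord_recr /= IH (insubdK _ (f01 _)).
Qed.

Lemma bigop1E n (F : 'I_n.+1 -> R) : (forall i, in01 (F i)) ->
  bigop1 op F = val (\big[op_ui/e_ui]_i insubd e_ui (F i)).
Proof.
move=> F01; rewrite /bigop1 iop_big => [|i]; last exact: F01.
by congr val; apply: eq_bigr => i _; rewrite inord_val.
Qed.

Lemma bigop1_perm n (F G : 'I_n.+1 -> R) (s : 'S_n.+1) :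
  (forall i, in01 (F i)) -> (forall i, G i = F (s i)) -> bigop1 op G = bigop1 op F.
Proof.
move=> F01 GF; have G01 i : in01 (G i) by rewrite GF.
rewrite !bigop1E //; congr val; rewrite [RHS](reindex_inj (@perm_inj _ s)).
by apply: eq_bigr => i _; rewrite GF.
Qed.

Section Rearrangement.
Variables (le : rel R) (h : R -> R -> R).
Hypotheses (le_refl : reflexive le) (le_trans : transitive le).
Hypothesis le_op2l :
  forall a b c, in01 a -> in01 b -> in01 c -> le b c -> le (op a b) (op a c).
Hypothesis h01 : forall a b, in01 a -> in01 b -> in01 (h a b).
Hypothesis h_exchange : forall a b c d, in01 a -> in01 b -> in01 c -> in01 d ->
  a <= b -> c <= d -> le (op (h a d) (h b c)) (op (h a c) (h b d)).

Lemma exchange_rearrangement : rearrangement_chain le op h.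
Proof.
move=> n x y s [x01 x_mono] [y01 y_mono].
have hxy01 p i : in01 (h (x p) (y i)) by apply: h01.
pose H p i := insubd e_ui (h (x p) (y i)).
have HK p i : val (H p i) = h (x p) (y i) by rewrite insubdK //; apply: hxy01.
have le_op2l_ui (a b c : unit_interval) :
    le (val b) (val c) -> le (val (op_ui a b)) (val (op_ui a c)).
  by apply: le_op2l; apply: valP.
rewrite !bigop1E //; split.
- pose r := perm (@rev_ord_inj n.+1).
  have rev_exchange (p q k m : 'I_n.+1) : (p <= q)%N -> (k <= m)%N ->
      le (val (op_ui (H (rev_ord p) k) (H (rev_ord q) m)))
         (val (op_ui (H (rev_ord p) m) (H (rev_ord q) k))).
    move=> le_pq le_km.
    rewrite [op_ui (H _ k) _]op_uiC [op_ui (H (rev_ord p) m) _]op_uiC /= !HK.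
    apply: h_exchange; rewrite ?x01 ?y01 ?y_mono //.
    by apply: x_mono; rewrite leq_sub2l.
  rewrite [X in le _ (val X)](eq_bigr (fun i => H (rev_ord ((s * r)%g i)) i)).
    exact: (@le_big_perm_diag _ _ op_ui [rel a b | le (val b) (val a)]
      (fun a => le_refl _) (fun a b c hba hcb => le_trans hcb hba)
      (fun a b c => le_op2l_ui a c b) n (fun p i => H (rev_ord p) i) rev_exchange).
  by move=> i _; rewrite permM permE rev_ordK.
- have exchange (p q k m : 'I_n.+1) : (p <= q)%N -> (k <= m)%N ->
      le (val (op_ui (H p m) (H q k))) (val (op_ui (H p k) (H q m))).
    move=> le_pq le_km; rewrite /= !HK.
    by apply: h_exchange; rewrite ?x01 ?y01 ?x_mono ?y_mono.
  exact: (@le_big_perm_diag _ _ op_ui [rel a b | le (val a) (val b)]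
    (fun a => le_refl _) (fun a b c => @le_trans _ _ _) le_op2l_ui n H exchange).
Qed.

End Rearrangement.

End UnitIntervalMonoid.

Lemma in01_compl (R : realFieldType) (a : R) : in01 a -> in01 (1 - a).
Proof. by case/andP=> a0 a1; apply/andP; split; lra. Qed.

Lemma sorted01_compl_rev (R : realFieldType) n (z : 'I_n.+1 -> R) :
  sorted01 z -> sorted01 (fun i => 1 - z (rev_ord i)).
Proof.
case=> z01 z_mono; split=> [i|i j le_ij]; first exact: in01_compl.
by apply: lerB => //; apply: z_mono; rewrite leq_sub2l.
Qed.

Lemma iop_compl (R : realFieldType) (g g' : R -> R -> R) (F : nat -> R) k :
  (forall a b, g' a b = 1 - g (1 - a) (1 - b)) ->
  1 - iop g' F k = iop g (fun i => 1 - F i) k.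
Proof. by move=> g'E; elim: k => [|k IH] //=; rewrite g'E subKr IH. Qed.

Section DeMorganDuality.
Variables (R : realFieldType) (g f g' f' : R -> R -> R) (e : R).
Hypothesis g_monoid : com_monoid01 g e.
Hypothesis f01 : forall a b, in01 a -> in01 b -> in01 (f a b).
Hypothesis g'E : forall a b, g' a b = 1 - g (1 - a) (1 - b).
Hypothesis f'E : forall a b, f' a b = 1 - f (1 - a) (1 - b).

Lemma compl_bigop1_rev n (F G : 'I_n.+1 -> R) : (forall i, in01 (F i)) ->
  (forall i, G i = 1 - F (rev_ord i)) -> 1 - bigop1 g' F = bigop1 g G.
Proof.
move=> F01 GF; have -> : 1 - bigop1 g' F = bigop1 g (fun i => 1 - F i) by exact: iop_compl.
symmetry.
apply: (bigop1_perm g_monoid (s := perm (@rev_ord_inj n.+1))) => [i|i].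
  exact: in01_compl.
by rewrite permE GF.
Qed.

Variables (le le' : rel R).
Hypothesis le_compl : forall a b, le (1 - a) (1 - b) -> le' a b.

Lemma demorgan_rearrangement :
  rearrangement_chain le g f -> rearrangement_chain le' g' f'.
Proof.
move=> chain n x y s x_sorted y_sorted.
have [x01 _] := x_sorted; have [y01 _] := y_sorted.
pose r := perm (@rev_ord_inj n.+1).
pose xc i := 1 - x (rev_ord i); pose yc i := 1 - y (rev_ord i).
have compl (u v : 'I_n.+1 -> 'I_n.+1) : (forall i, v i = rev_ord (u (rev_ord i))) ->
    1 - bigop1 g' (fun i => f' (x (u i)) (y i)) = bigop1 g (fun i => f (xc (v i)) (yc i)).
  move=> uv; apply: compl_bigop1_rev => i.
    by rewrite f'E; apply/in01_compl/f01; apply: in01_compl.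
  by rewrite f'E subKr uv /xc rev_ordK.
have [lo hi] := chain n xc yc (r * s * r)%g
  (sorted01_compl_rev x_sorted) (sorted01_compl_rev y_sorted).
have EA := compl (@rev_ord _) (@rev_ord _) (fun i => esym (rev_ordK _)).
have EB : 1 - bigop1 g' (fun i => f' (x (s i)) (y i))
          = bigop1 g (fun i => f (xc ((r * s * r)%g i)) (yc i)).
  by apply: compl => i; rewrite !permM !permE.
have EC := compl id id (fun i => esym (rev_ordK i)).
rewrite -EA -EB -EC in lo hi.
by split; apply: le_compl.
Qed.

End DeMorganDuality.

Lemma min_add_exchange (R : realDomainType) (a b c d : R) : a <= b -> c <= d ->
  Num.min a d + Num.min b c <= Num.min a c + Num.min b d.
Proof.
by move=> ab cd; case: (lerP a d); case: (lerP b c); case: (lerP a c); case: (lerP b d);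
  lra.
Qed.

Lemma in01_1 (R : realFieldType) : in01 (1 : R).
Proof. by rewrite /in01 ler01 lexx. Qed.

Section NilpotentMinimum.
Variable R : realFieldType.
Implicit Types a b c d : R.

Lemma TnC a b : Tn a b = Tn b a.
Proof. by rewrite /Tn addrC minC. Qed.

Lemma Tn_eq0 a b : a + b <= 1 -> Tn a b = 0.
Proof. by rewrite /Tn leNgt => /negbTE ->. Qed.

Lemma Tn_min a b : 1 < a + b -> Tn a b = Num.min a b.
Proof. by rewrite /Tn => ->. Qed.

Lemma Tn_ge0 a b : 0 <= a -> 0 <= b -> 0 <= Tn a b.
Proof. by move=> a0 b0; rewrite /Tn; case: ifP; rewrite // le_min a0. Qed.

Lemma Tn01 a b : in01 a -> in01 b -> in01 (Tn a b).
Proof.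
case/andP=> a0 a1 /andP[b0 b1]; rewrite /in01 Tn_ge0 //=.
by rewrite /Tn; case: ifP; rewrite ?ler01 // ge_min a1.
Qed.

Lemma Tn_TnE a b c : Tn a (Tn b c) =
  if [&& 1 < a + b, 1 < a + c & 1 < b + c] then Num.min a (Num.min b c) else 0.
Proof.
case: (ltrP 1 (b + c)) => bc; last first.
  by rewrite (Tn_eq0 bc) !andbF /Tn addr0; case: ifP => // a1; apply: min_r; lra.
by rewrite andbT (Tn_min bc) /Tn addr_minr lt_min.
Qed.

Lemma TnA a b c : Tn a (Tn b c) = Tn (Tn a b) c.
Proof.
by rewrite [RHS]TnC !Tn_TnE (addrC c a) (addrC c b) andbC andbA [Num.min c _]minC minA.
Qed.

Lemma Tn1 a : in01 a -> Tn 1 a = a.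
Proof.
case/andP=> a0 a1; have [->|a_neq0] := eqVneq a 0; first by rewrite Tn_eq0 ?addr0.
have a_pos : 0 < a by rewrite lt0r a_neq0.
by rewrite Tn_min ?min_r //; lra.
Qed.

Lemma Tn_homo a b c : in01 a -> in01 b -> in01 c -> b <= c -> Tn a b <= Tn a c.
Proof.
case/andP=> a0 _ _ /andP[c0 _] bc; have [ab|ab] := ltrP 1 (a + b).
  by rewrite !Tn_min ?le_min ?ge_min ?lexx ?bc ?orbT //; lra.
by rewrite Tn_eq0 // Tn_ge0.
Qed.

Lemma Tn_com_monoid01 : com_monoid01 (@Tn R) 1.
Proof.
split=> [|a b|a b c _ _ _|a b _ _|a]; [exact: in01_1 | exact: Tn01 | exact: TnA |
  exact: TnC | exact: Tn1].
Qed.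

End NilpotentMinimum.

Section Lukasiewicz.
Variable R : realFieldType.
Implicit Types a b c d : R.

Lemma TLC a b : TL a b = TL b a.
Proof. by rewrite /TL [a + b]addrC. Qed.

Lemma TL_eq0 a b : a + b <= 1 -> TL a b = 0.
Proof. by move=> ab; rewrite /TL max_r // subr_le0. Qed.

Lemma TL_sub a b : 1 <= a + b -> TL a b = a + b - 1.
Proof. by move=> ab; rewrite /TL max_l // subr_ge0. Qed.

Lemma TL_ge0 a b : 0 <= TL a b.
Proof. by rewrite /TL le_max lexx orbT. Qed.

Lemma TL01 a b : in01 a -> in01 b -> in01 (TL a b).
Proof.
by case/andP=> _ a1 /andP[_ b1]; rewrite /in01 TL_ge0 /TL ge_max ler01 andbT; lra.
Qed.

Lemma TL_TLE a b c : a <= 1 -> TL a (TL b c) = Num.max (a + b + c - 2) 0.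
Proof.
move=> a1; have [bc|bc] := lerP (b + c) 1.
  by rewrite (TL_eq0 bc) TL_eq0 ?max_r //; lra.
by rewrite (TL_sub (ltW bc)) /TL; congr Num.max; ring.
Qed.

Lemma TLA a b c : in01 a -> in01 c -> TL a (TL b c) = TL (TL a b) c.
Proof.
by case/andP=> _ a1 /andP[_ c1]; rewrite [RHS]TLC !TL_TLE //; congr Num.max; ring.
Qed.

Lemma TL1 a : 0 <= a -> TL 1 a = a.
Proof. by move=> a0; rewrite TL_sub; [ring | lra]. Qed.

Lemma TL_homo a b c : b <= c -> TL a b <= TL a c.
Proof. by move=> bc; rewrite /TL ge_max !le_max lexx !orbT andbT lerD2r lerD2l bc. Qed.

Lemma TL_com_monoid01 : com_monoid01 (@TL R) 1.
Proof.
split=> [|a b|a b c ha _ hc|a b _ _|a /andP[a0 _]]; [exact: in01_1 | exact: TL01 |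
  exact: TLA | exact: TLC | exact: TL1].
Qed.

End Lukasiewicz.

Section ExchangeInequalities.
Variable R : realFieldType.
Implicit Types a b c d : R.

Lemma TL_Tn_exchange a b c d : in01 a -> in01 b -> in01 c -> in01 d ->
  a <= b -> c <= d -> TL (Tn a d) (Tn b c) <= TL (Tn a c) (Tn b d).
Proof.
move=> ha hb hc hd ab cd.
have [ad|ad] := lerP (a + d) 1.
  by case/andP: (Tn01 hb hc) => _ ?; rewrite (Tn_eq0 ad) TL_eq0 ?TL_ge0 ?add0r.
have [bc|bc] := lerP (b + c) 1.
  by case/andP: (Tn01 ha hd) => _ ?; rewrite (Tn_eq0 bc) TL_eq0 ?TL_ge0 ?addr0.
rewrite (Tn_min ad) (Tn_min bc).
have [small|big] := lerP (Num.min a d + Num.min b c) 1; first by rewrite TL_eq0 ?TL_ge0.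
have ac : 1 < a + c by move: big; case: (lerP a d); case: (lerP b c); lra.
have bd : 1 < b + d by move: big; case: (lerP a d); case: (lerP b c); lra.
have exch := min_add_exchange ab cd.
by rewrite (Tn_min ac) (Tn_min bd) !TL_sub; lra.
Qed.

Lemma Tn_TL_exchange a b c d : in01 a -> in01 b -> in01 c -> in01 d ->
  a <= b -> c <= d -> Tn (TL a c) (TL b d) <= Tn (TL a d) (TL b c).
Proof.
move=> ha hb hc hd ab cd.
have [small|big] := lerP (TL a c + TL b d) 1; first by rewrite Tn_eq0 ?Tn_ge0 ?TL_ge0.
case/andP: (TL01 ha hc) => _ ac1; case/andP: (TL01 hb hd) => _ bd1.
have [ac|ac] := lerP (a + c) 1; first by move: big; rewrite (TL_eq0 ac); lra.
have [bd|bd] := lerP (b + d) 1; first by move: big; rewrite (TL_eq0 bd); lra.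
move: big; rewrite (TL_sub (ltW ac)) (TL_sub (ltW bd)) => big.
rewrite (Tn_min big) (@TL_sub _ a d) ?(@TL_sub _ b c) ?Tn_min; try lra.
by rewrite le_min !ge_min; apply/andP; split; apply/orP; left; lra.
Qed.

End ExchangeInequalities.

Lemma Tn'_demorgan (R : realFieldType) (a b : R) : Tn' a b = 1 - Tn (1 - a) (1 - b).
Proof.
rewrite /Tn' /Tn; case: (ltrP (a + b) 1); case: (ltrP 1 (1 - a + (1 - b))); try lra.
by case: (lerP a b); case: (lerP (1 - a) (1 - b)); lra.
Qed.

Lemma TL'_demorgan (R : realFieldType) (a b : R) : TL' a b = 1 - TL (1 - a) (1 - b).
Proof.
by rewrite /TL' /TL; case: (lerP (a + b) 1); case: (lerP (1 - a + (1 - b) - 1) 0); lra.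
Qed.

Theorem theorem13 (R : realFieldType) :
  (rearrangement_ineq (@Tn R) (@TL R) /\ dual_rearrangement_ineq (@Tn R) (@TL R)) /\
  (rearrangement_ineq (@TL' R) (@Tn' R) /\ dual_rearrangement_ineq (@TL' R) (@Tn' R)).
Proof.
have TnTL_rearr : rearrangement_chain <=%R (@TL R) (@Tn R).
  apply: (@exchange_rearrangement R _ _ (TL_com_monoid01 R) <=%R).
  - exact: lexx.
  - exact: le_trans.
  - by move=> a b c _ _ _; apply: TL_homo.
  - exact: Tn01.
  - exact: TL_Tn_exchange.
have TnTL_dual : rearrangement_chain >=%R (@Tn R) (@TL R).
  apply: (@exchange_rearrangement R _ _ (Tn_com_monoid01 R) >=%R).
  - exact: lexx.
  - by move=> a b c ba cb; apply: le_trans cb ba.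
  - by move=> a b c ha hb hc; apply: Tn_homo.
  - exact: TL01.
  - exact: Tn_TL_exchange.
split; split => //.
- apply: (demorgan_rearrangement (Tn_com_monoid01 R) (@TL01 R) (@Tn'_demorgan R)
    (@TL'_demorgan R) _ TnTL_dual) => a b /=.
  by rewrite lerD2l lerN2.
- apply: (demorgan_rearrangement (le' := >=%R) (TL_com_monoid01 R) (@Tn01 R)
    (@TL'_demorgan R) (@Tn'_demorgan R) _ TnTL_rearr) => a b /=.
  by rewrite lerD2l lerN2.
Qed.
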